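(* Let $S^1=[0,1)$ with addition mod 1 and $T(x)=2x\pmod 1$. Let $\mu$ be the Gibbs probability for $\log J$, where $J:S^1\to\mathbb{R}$ is positive, Hölder continuous, with $\sum_{x:\,T(x)=y}J(x)=1$ for all $y$. For $n\in\mathbb{N}$ let $\nu_n=\mu*\mu*\cdots*\mu$ ($n$ factors). Then $\nu_n$ converges weakly, as $n\to\infty$, to the Lebesgue probability on $S^1$.
   Context: The Gibbs probability for $\log J$ is the probability $\mu$ with $\mathcal{L}_{\log J}^*\mu=\mu$, where $\mathcal{L}_{\log J}(\varphi)(y)=\sum_{x:\,T(x)=y}J(x)\varphi(x)$. Convolution: $\int\phi\,d(\eta*\mu)=\int\!\!\int\phi(x+y)\,d\mu(y)\,d\eta(x)$ (sums mod 1). *)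

From HB Require Import structures.
From mathcomp Require Import all_boot all_order all_algebra.
From mathcomp Require Import all_classical all_reals all_analysis.
Set Implicit Arguments. Unset Strict Implicit. Unset Printing Implicit Defensive.
Import Order.TTheory GRing.Theory Num.Theory.
Import numFieldNormedType.Exports.
Local Open Scope classical_set_scope.
Local Open Scope ring_scope.

(* The circle S^1 = [0,1) with addition mod 1 is modelled by R; functions on
   S^1 are 1-periodic functions on R, and probabilities on S^1 are
   probabilities on R carried by [0,1). *)
Definition periodic1 {R : realType} (f : R -> R) := forall x, f (x + 1) = f x.

(* Hölder continuity on the circle (for 1-periodic functions equivalent to
   Hölder continuity on R). *)
Definition holder {R : realType} (f : R -> R) :=
  exists C a : R, 0 < a /\ a <= 1 /\ 0 <= C /\
    forall x y, `|f x - f y| <= C * (`|x - y| `^ a).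

(* Transfer (Ruelle) operator for T(x) = 2x mod 1:
   L_{log J}(phi)(y) = sum_{x : T x = y} J x phi x. *)
Definition transfer {R : realType} (J phi : R -> R) (y : R) : R :=
  J (y / 2) * phi (y / 2) + J ((y + 1) / 2) * phi ((y + 1) / 2).

(* mu is the Gibbs probability for log J : L^* mu = mu, i.e.
   int (L phi) dmu = int phi dmu for every continuous phi on S^1. *)
Definition gibbs {R : realType} (J : R -> R) (mu : probability R R) :=
  mu `[0, 1[%classic = 1%E /\
  forall phi : R -> R, continuous phi -> periodic1 phi ->
    \int[mu]_(y in setT) transfer J phi y = \int[mu]_(y in setT) phi y.

(* Integral of phi against nu_n = mu * ... * mu (n factors), nu_0 = delta_0,
   nu_{n+1} = nu_n * mu, with
   int phi d(eta * mu) = int int phi(x + y) dmu(y) deta(x). *)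
Fixpoint conv_int {R : realType} (mu : probability R R) (n : nat)
    (phi : R -> R) : R :=
  match n with
  | 0 => phi 0
  | n.+1 => conv_int mu n (fun x => \int[mu]_(y in setT) phi (x + y))
  end.

(* Let P g x = \int g (x + y) dmu(y), so that \int phi dnu_n = (P^n phi) 0, and let U be
   the transfer operator of Lebesgue measure, U g y = (g (y/2) + g ((y+1)/2)) / 2, which
   preserves Lebesgue integrals over [0, 1). Once 2^-m is below the modulus of continuity
   of phi, psi = U^m phi is eps-close to the constant a = psi 0, hence so is
   \int phi = \int psi. Split phi = h + A with A x = psi (2^m x): then |A - a| <= eps,
   so |P^n A - a| <= eps for every n, and U^m h = 0.
   The kernel of U^m is P-invariant and P contracts it in sup norm by 1 - (2 eta)^m,
   where eta = min J > 0: by the Gibbs property \int h (x + .) dmu equals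
   \int L^m (h (x + .)) dmu, the Doeblin bound
   |L^m g - (2 eta)^m U^m g| <= (1 - (2 eta)^m) sup |g| holds for the transfer operator L
   of log J, and U^m (h (x + .)) = (U^m h) (2^m x + .) = 0. Hence P^n h -> 0. *)

From HB Require Import structures.
From mathcomp Require Import all_boot all_order all_algebra.
From mathcomp Require Import all_classical all_reals all_analysis.
From mathcomp Require Import measurable_realfun ring lra.
Import Order.TTheory GRing.Theory Num.Theory.
Import numFieldNormedType.Exports.
Local Open Scope classical_set_scope.
Local Open Scope ring_scope.
Set Implicit Arguments.
Unset Strict Implicit.
Unset Printing Implicit Defensive.

Section CircleFunctions.
Context {R : realType}.
Implicit Types (f g : R -> R) (x y : R).

Definition circle_continuous f := continuous f /\ periodic1 f.

Lemma periodic1_natr f : periodic1 f -> forall (n : nat) x, f (x + n%:R) = f x.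
Proof.
move=> pf; elim=> [|n IH] x; first by rewrite addr0.
by rewrite -natr1 addrA pf IH.
Qed.

Lemma periodic1_intr f : periodic1 f -> forall (k : int) x, f (x + k%:~R) = f x.
Proof.
move=> pf [n|n] x; first exact: periodic1_natr.
by rewrite NegzE mulrNz -[in RHS](subrK n.+1%:R x) periodic1_natr.
Qed.

Lemma subr_floor_itv x : 0 <= x - (Num.floor x)%:~R < 1.
Proof.
have /andP[flx xfl] := floor_itv x.
by move: xfl; rewrite subr_ge0 flx ltrBlDl intrD addrC.
Qed.

Lemma periodic1_subr_floor f : periodic1 f -> forall x, f x = f (x - (Num.floor x)%:~R).
Proof. by move=> pf x; rewrite -mulrNz periodic1_intr. Qed.

Lemma periodic1_EVT f : circle_continuous f -> exists c d, forall x, f c <= f x <= f d.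
Proof.
move=> [cf pf].
have cf01 := continuous_subspaceT cf : {within `[0, 1], continuous f}.
have [c _ fc] := EVT_min ler01 cf01; have [d _ fd] := EVT_max ler01 cf01.
exists c, d => x; rewrite (periodic1_subr_floor pf x).
have /andP[x0 x1] := subr_floor_itv x.
have x01 : x - (Num.floor x)%:~R \in `[0, 1] by rewrite in_itv /= x0 ltW.
by rewrite fc ?fd.
Qed.

Lemma periodic1_bounded f : circle_continuous f -> exists M, forall x, `|f x| <= M.
Proof.
move=> /periodic1_EVT[c [d fcd]]; exists (`|f c| + `|f d|) => x.
have /andP[fcx fxd] := fcd x.
have := lerNnormlW (lexx `|f c|); have := ler_norm (f d).
have := normr_ge0 (f c); have := normr_ge0 (f d).
by rewrite ler_norml; lra.
Qed.

Lemma segment_unif_continuous f (a b : R) : continuous f -> forall e, 0 < e ->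
  exists2 d, 0 < d &
    forall x, a <= x <= b -> forall y, `|x - y| < d -> `|f x - f y| < e.
Proof.
move=> cf e e0.
pose P d x := forall y, `|x - y| < d -> `|f x - f y| < e.
have near_P : \forall d \near (0:R)^'+, `[a, b] `<=` P d.
  apply: (proj1 (compact_near_coveringP _) (@segment_compact R a b)) => x _.
  have e20 : 0 < e / 2 by rewrite divr_gt0.
  have /cvgrPdist_lt/(_ (e / 2) e20)/nbhs_ballP[r /= r0 fr] := cf x.
  have r20 : 0 < r / 2 by rewrite divr_gt0.
  near=> x' d => y x'y.
  have xx' : `|x - x'| < r / 2 by near: x'; apply/nbhs_ballP; exists (r / 2).
  have dr : d < r / 2 by near: d; exact: nbhs_right_lt.
  have fxx' : `|f x - f x'| < e / 2 by apply: fr; rewrite /ball /=; lra.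
  have fxy : `|f x - f y| < e / 2.
    apply: fr; rewrite /ball /= (le_lt_trans (ler_distD x' _ _)) //.
    by rewrite [r]splitr ltrD // (lt_trans x'y).
  rewrite -(subrKA (f x)) (le_lt_trans (ler_normD _ _)) // [e]splitr ltrD //.
  by rewrite distrC.
near (0:R)^'+ => d.
exists d; first by near: d; exact: nbhs_right_gt.
move=> x xab; have : `[a, b] `<=` P d by near: d; exact: near_P.
by apply; rewrite /= in_itv.
Unshelve. all: by end_near.
Qed.

Lemma periodic1_unif_continuous f : circle_continuous f -> forall e, 0 < e ->
  exists2 d, 0 < d & forall x y, `|x - y| < d -> `|f x - f y| < e.
Proof.
move=> [cf pf] e e0.
have [d d0 fd] := segment_unif_continuous 0 1 cf e0.
exists d => // x y xy.
rewrite (periodic1_subr_floor pf x) -(periodic1_intr pf (- Num.floor x) y) mulrNz.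
apply: fd; first by have /andP[-> /ltW ->] := subr_floor_itv x.
by rewrite opprB addrA subrK.
Qed.

Lemma holder_continuous f : holder f -> continuous f.
Proof.
move=> [C [a [a0 [a1 [C0 fC]]]]] x.
apply/cvgrPdist_lt => e e0.
have C1 : 0 < C + 1 by rewrite ltr_wpDl.
have eC : 0 < e / (C + 1) by rewrite divr_gt0.
pose d := (e / (C + 1)) `^ a^-1.
have d0 : 0 < d by rewrite powR_gt0.
near=> y.
have xy : `|x - y| < d by near: y; apply/nbhs_ballP; exists d.
have xya : `|x - y| `^ a < e / (C + 1).
  have -> : e / (C + 1) = d `^ a.
    by rewrite /d -powRrM mulVf ?gt_eqF // powRr1 // ltW.
  by apply: gt0_ltr_powR => //; rewrite ?nnegrE ?ltW.
rewrite (le_lt_trans (fC x y)) // (le_lt_trans (ler_wpM2l C0 (ltW xya))) //.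
by rewrite mulrCA gtr_pMr // ltr_pdivrMr // mul1r ltrDl.
Unshelve. all: by end_near.
Qed.

Lemma continuous_comp_mulr f (c : R) : continuous f -> continuous (fun y => f (y * c)).
Proof. by move=> cf y; apply: continuous_comp; [exact: mulrr_continuous | exact: cf]. Qed.

Lemma continuous_comp_addr f (t : R) : continuous f -> continuous (fun y => f (y + t)).
Proof.
by move=> cf y; apply: continuous_comp; [apply: cvgD; [exact: cvg_id | exact: cvg_cst] | exact: cf].
Qed.

Lemma continuous_comp_addl f (t : R) : continuous f -> continuous (fun y => f (t + y)).
Proof.
by move=> cf y; apply: continuous_comp; [apply: cvgD; [exact: cvg_cst | exact: cvg_id] | exact: cf].
Qed.

Lemma circle_continuousB f g : circle_continuous f -> circle_continuous g ->
  circle_continuous (fun x => f x - g x).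
Proof.
move=> [cf pf] [cg pg]; split; last by move=> x; rewrite pf pg.
by move=> x; apply: cvgB; [exact: cf | exact: cg].
Qed.

Lemma iter_circle_continuous (F : (R -> R) -> R -> R) n g :
  (forall h, circle_continuous h -> circle_continuous (F h)) ->
  circle_continuous g -> circle_continuous (iter n F g).
Proof. by move=> FC Cg; elim: n => //= n; exact: FC. Qed.

End CircleFunctions.

Section TransferOperators.
Context {R : realType}.
Implicit Types (J g : R -> R).

(* J = 1/2 is the weight whose Gibbs measure is Lebesgue measure. *)
Definition leb_transfer : (R -> R) -> R -> R := transfer (fun=> 2^-1).

Lemma transfer_continuous J g : continuous J -> continuous g -> continuous (transfer J g).
Proof.
move=> cJ cg.
have half (f : R -> R) : continuous f -> continuous (fun y : R => f (y / 2)).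
  exact: continuous_comp_mulr.
have half1 (f : R -> R) : continuous f -> continuous (fun y : R => f ((y + 1) / 2)).
  by move=> cf; apply: (continuous_comp_addr (f := fun y => f (y / 2))); exact: half.
by move=> y; apply: cvgD; apply: cvgM; [exact: half | exact: half | exact: half1 | exact: half1].
Qed.

Lemma leb_transfer_continuous g : continuous g -> continuous (leb_transfer g).
Proof. by apply: transfer_continuous; exact: cst_continuous. Qed.

Lemma transfer_circle_continuous J g :
  circle_continuous J -> circle_continuous g -> circle_continuous (transfer J g).
Proof.
move=> [cJ pJ] [cg pg]; split; first exact: transfer_continuous.
move=> y; rewrite /transfer.
have -> : (y + 1 + 1) / 2 = y / 2 + 1 by field.
by rewrite pg pJ addrC.
Qed.

Lemma leb_transfer_circle_continuous g :
  circle_continuous g -> circle_continuous (leb_transfer g).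
Proof. by apply: transfer_circle_continuous; split; [exact: cst_continuous |]. Qed.

Lemma iter_transfer_circle_continuous m J g :
  circle_continuous J -> circle_continuous g -> circle_continuous (iter m (transfer J) g).
Proof. by move=> CJ; apply: iter_circle_continuous => h; exact: transfer_circle_continuous. Qed.

Lemma iter_leb_transfer_circle_continuous m g :
  circle_continuous g -> circle_continuous (iter m leb_transfer g).
Proof. exact/iter_circle_continuous/leb_transfer_circle_continuous. Qed.

Lemma iter_transferB J m f g :
  iter m (transfer J) (fun x => f x - g x) =
  fun y => iter m (transfer J) f y - iter m (transfer J) g y.
Proof. by elim: m => //= m ->; apply: funext => y; rewrite /transfer; ring. Qed.

Lemma circle_continuous_dilate m g :
  circle_continuous g -> circle_continuous (fun x => g (x * 2 ^+ m)).
Proof.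
move=> [cg pg]; split; first exact: continuous_comp_mulr.
by move=> x; rewrite mulrDl mul1r -natrX periodic1_natr.
Qed.

Lemma transfer_norm_le J g (s K : R) : (forall x, 0 <= J x) ->
  (forall y, J (y / 2) + J ((y + 1) / 2) = s) -> (forall x, `|g x| <= K) ->
  forall y, `|transfer J g y| <= s * K.
Proof.
move=> J0 Js gK y; rewrite -(Js y) mulrDl (le_trans (ler_normD _ _)) //.
by rewrite lerD // normrM ger0_norm // ler_wpM2l.
Qed.

Lemma iter_leb_transfer_norm_le m g (K : R) : (forall x, `|g x| <= K) ->
  forall y, `|iter m leb_transfer g y| <= K.
Proof.
move=> gK; elim: m => //= m IH y; rewrite -[K]mul1r.
by apply: transfer_norm_le => // z; lra.
Qed.

Lemma iter_leb_transfer_shift m g (t : R) :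
  iter m leb_transfer (fun y => g (t + y)) = fun z => iter m leb_transfer g (t * 2 ^+ m + z).
Proof.
elim: m => [|m /= ->]; first by apply: funext => z; rewrite mulr1.
apply: funext => z; rewrite /leb_transfer /transfer exprSr mulrA.
by congr (_ * iter m leb_transfer g _ + _ * iter m leb_transfer g _); field.
Qed.

Lemma leb_transfer_dilate g : periodic1 g -> leb_transfer (fun x => g (x * 2)) = g.
Proof.
move=> pg; apply: funext => z; rewrite /leb_transfer /transfer.
by rewrite !mulfVK ?pnatr_eq0 // pg -mulrDl -div1r -splitr mul1r.
Qed.

Lemma iter_leb_transfer_dilate m g : periodic1 g ->
  iter m leb_transfer (fun x => g (x * 2 ^+ m)) = g.
Proof.
elim: m g => [|m IH] g pg /=; first by apply: funext => x; rewrite mulr1.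
have -> : (fun x => g (x * 2 ^+ m.+1)) = (fun x => (fun w => g (w * 2)) (x * 2 ^+ m)).
  by apply: funext => x; rewrite exprSr mulrA.
rewrite (IH (fun w => g (w * 2))) ?leb_transfer_dilate // => w.
by rewrite mulrDl mul1r -[2]/(1 + 1) addrA !pg.
Qed.

Lemma iter_leb_transfer_modulus m g (d e : R) :
  (forall x y, `|x - y| < d -> `|g x - g y| < e) ->
  forall x y, `|x - y| < d * 2 ^+ m ->
    `|iter m leb_transfer g x - iter m leb_transfer g y| < e.
Proof.
move=> gd; elim: m => [|m IH] x y /=; first by rewrite mulr1; exact: gd.
rewrite exprSr mulrA ltr_norml => /andP[xy1 xy2].
rewrite /leb_transfer /transfer.
have h1 : `|x / 2 - y / 2| < d * 2 ^+ m by rewrite ltr_norml; apply/andP; split; lra.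
have h2 : `|(x + 1) / 2 - (y + 1) / 2| < d * 2 ^+ m.
  by rewrite ltr_norml; apply/andP; split; lra.
move: (IH _ _ h1) (IH _ _ h2); rewrite !ltr_norml => /andP[a1 a2] /andP[b1 b2].
by apply/andP; split; lra.
Qed.

Lemma iter_leb_transfer_flat g : circle_continuous g -> forall e, 0 < e ->
  exists m, forall x, `|iter m leb_transfer g x - iter m leb_transfer g 0| < e.
Proof.
move=> Cg e e0; have [d d0 gd] := periodic1_unif_continuous Cg e0.
pose m := (Num.truncn d^-1).+1; exists m => x.
have [_ pUg] := iter_leb_transfer_circle_continuous m Cg.
have dm : 1 < d * 2 ^+ m.
  have m_gt : d^-1 < m%:R := truncnS_gt _.
  have m_lt : m%:R < 2 ^+ m :> R by rewrite -natrX ltr_nat ltn_expl.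
  by rewrite -[X in X < _](mulfV (lt0r_neq0 d0)) ltr_pM2l // (lt_trans m_gt).
rewrite (periodic1_subr_floor pUg x); apply: (iter_leb_transfer_modulus gd).
by have /andP[x0 x1] := subr_floor_itv x; rewrite subr0 ger0_norm // (lt_trans x1).
Qed.

End TransferOperators.

Section Doeblin.
Context {R : realType} (J : R -> R) (eta : R).
Hypothesis eta_ge0 : 0 <= eta.
Hypothesis J_ge : forall x, eta <= J x.
Hypothesis J_sum1 : forall y, J (y / 2) + J ((y + 1) / 2) = 1.

Lemma iter_transfer_doeblin m g (K : R) : (forall x, `|g x| <= K) ->
  forall y, `|iter m (transfer J) g y - (2 * eta) ^+ m * iter m leb_transfer g y|
            <= (1 - (2 * eta) ^+ m) * K.
Proof.
move=> gK; elim: m => [|m IH] y /=.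
  by rewrite expr0 mul1r subrr normr0 subrr mul0r.
set c := (2 * eta) ^+ m; set Lg := iter m (transfer J) g.
set Ug := iter m leb_transfer g.
have c_ge0 : 0 <= c by rewrite exprn_ge0 // mulr_ge0.
(* transfer J - 2 eta leb_transfer = transfer (J - eta), with weights >= 0 of sum 1 - 2 eta. *)
have -> : transfer J Lg y - (2 * eta) ^+ m.+1 * leb_transfer Ug y =
    transfer J (fun x => Lg x - c * Ug x) y + c * transfer (fun x => J x - eta) Ug y.
  by rewrite /leb_transfer /transfer exprS -/c; field.
have L_le := transfer_norm_le (fun x => le_trans eta_ge0 (J_ge x)) J_sum1 IH y.
have J_eta_ge0 x : 0 <= J x - eta by rewrite subr_ge0.
have J_eta_sum y' : J (y' / 2) - eta + (J ((y' + 1) / 2) - eta) = 1 - 2 * eta.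
  by have := J_sum1 y'; lra.
have U_le := transfer_norm_le J_eta_ge0 J_eta_sum (iter_leb_transfer_norm_le m gK) y.
rewrite (le_trans (ler_normD _ _)) // normrM (ger0_norm c_ge0).
have -> : (1 - (2 * eta) ^+ m.+1) * K = 1 * ((1 - c) * K) + c * ((1 - 2 * eta) * K).
  by rewrite exprS -/c; ring.
by rewrite lerD // ler_wpM2l.
Qed.

End Doeblin.

Section LebesgueInvariance.
Context {R : realType}.
Notation leb := (@lebesgue_measure R).

Let integral01_primitive (F f : R -> R) : continuous f ->
    (forall z, -1 < z -> derivable F z 1 /\ F^`()%classic z = f z) ->
  (\int[leb]_(x in `[0%R, 1%R]) (f x)%:E = (F 1 - F 0)%:E)%E.
Proof.
move=> cf dF; have dF' z : 0 <= z -> derivable F z 1.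
  by move=> z0; have /dF[] : -1 < z by lra.
rewrite EFinB; apply: continuous_FTC2 ltr01 _ _ _.
- exact: continuous_subspaceT.
- split.
  + by move=> z; rewrite in_itv /= => /andP[/ltW/dF'].
  + by apply/cvg_at_right_filter/differentiable_continuous/derivable1_diffP/dF'.
  + by apply/cvg_at_left_filter/differentiable_continuous/derivable1_diffP/dF'.
- by move=> z; rewrite in_itv /= => /andP[z0 _]; have /dF[_ ->] : -1 < z by lra.
Qed.

Let affine_derive (b c x : R) :
  derivable (fun z : R => (z + b) * c) x 1 /\ ((fun z : R => (z + b) * c)^`())%classic x = c.
Proof.
have dbc : is_derive x 1 (fun z : R => (z + b) * c) c.
  have -> : (fun z : R => (z + b) * c) = (fun z => c *: z + b * c).
    by apply: funext => z; rewrite /GRing.scale /=; ring.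
  by apply: is_derive_eq; rewrite scaler1 addr0.
by split; [exact: ex_derive | rewrite derive1E; exact: derive_val].
Qed.

Variable g : R -> R.
Hypothesis cg : continuous g.

(* The base point -1 makes G a primitive of g on an open set containing [0, 1]. *)
Let G (x : R) : R := \int[leb]_(t in `[-1, x]) g t.

Let G_primitive x : -1 < x -> derivable G x 1 /\ G^`()%classic x = g x.
Proof.
move=> x_gt; apply: (@continuous_FTC1_closed R g (-1) x (x + 1)) => //.
- by rewrite ltrDl ltr01.
- apply: continuous_compact_integrable; first exact: segment_compact.
  exact: continuous_subspaceT.
- exact: cg.
Qed.

Let G_half_primitive (b x : R) : -1 < (x + b) / 2 ->
  derivable (fun z => G ((z + b) / 2)) x 1 /\
  (fun z => G ((z + b) / 2))^`()%classic x = 2^-1 * g ((x + b) / 2).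
Proof.
move=> xb_gt; have [da da'] := affine_derive b 2^-1 x.
have [dG dG'] := G_primitive xb_gt.
split; last by rewrite (derive1_comp da dG) dG' da' mulrC.
apply/derivable1_diffP/(differentiable_comp (f := fun z : R => (z + b) / 2) (g := G)).
- exact/derivable1_diffP.
- exact/derivable1_diffP.
Qed.

(* A primitive of leb_transfer g with H 1 - H 0 = G 1 - G 0. *)
Let H : R -> R := (fun z : R => G ((z + 0) / 2)) + (fun z : R => G ((z + 1) / 2)).

Let H_primitive z : -1 < z -> derivable H z 1 /\ H^`()%classic z = leb_transfer g z.
Proof.
move=> z_gt.
have [d0 d0'] := @G_half_primitive 0 z ltac:(lra).
have [d1 d1'] := @G_half_primitive 1 z ltac:(lra).
split; first exact: (derivableD d0 d1).
rewrite derive1E deriveD; [| exact: d0 | exact: d1].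
by rewrite -[X in X + _]derive1E -[X in _ + X]derive1E d0' d1' addr0.
Qed.

Lemma leb_transfer_integral01 :
  \int[leb]_(x in `[0, 1[) leb_transfer g x = \int[leb]_(x in `[0, 1[) g x.
Proof.
have mU := continuous_measurable_fun (leb_transfer_continuous cg).
have mg := continuous_measurable_fun cg.
rewrite /Rintegral !integral_itv_bndo_bndc; last 2 first.
- by apply/measurable_EFinP; apply: measurable_funS mg.
- by apply/measurable_EFinP; apply: measurable_funS mU.
rewrite (integral01_primitive (leb_transfer_continuous cg) H_primitive).
rewrite (integral01_primitive cg G_primitive) /H; congr (fine _%:E).
rewrite !fctE; have -> : (1 + 1) / 2 = 1 :> R by field.
by rewrite !addr0 add0r mul0r; ring.
Qed.

End LebesgueInvariance.

Lemma iter_leb_transfer_integral01 {R : realType} m (g : R -> R) : continuous g ->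
  \int[lebesgue_measure]_(x in `[0, 1[) iter m leb_transfer g x =
  \int[lebesgue_measure]_(x in `[0, 1[) g x.
Proof.
move=> cg; have cUg k : continuous (iter k leb_transfer g).
  by elim: k => //= k; exact: leb_transfer_continuous.
by elim: m => //= m <-; exact: leb_transfer_integral01.
Qed.

Section UnitMassIntegral.
Context d (T : measurableType d) (R : realType).
Context (nu : {measure set T -> \bar R}) (D : set T).
Hypotheses (mD : measurable D) (nuD : nu D = 1%E).

Lemma mass1_integrable (g : T -> R) : measurable_fun D g ->
  (exists M, forall x, D x -> `|g x| <= M) -> nu.-integrable D (EFin \o g).
Proof.
move=> mg [M gM]; apply: measurable_bounded_integrable => //; first by rewrite nuD ltry.
exists M; split; first by rewrite num_real.
by move=> N MN x Dx; rewrite /= (le_trans (gM x Dx)) // ltW.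
Qed.

Lemma mass1_Rintegral_cst (a : R) : \int[nu]_(x in D) a = a.
Proof. by rewrite Rintegral_cst // nuD mulr1. Qed.

Lemma mass1_Rintegral_near (g : T -> R) (a e : R) : measurable_fun D g ->
  (forall x, D x -> `|g x - a| <= e) -> `|\int[nu]_(x in D) g x - a| <= e.
Proof.
move=> mg ga.
have g_bounds x : D x -> a - e <= g x <= a + e.
  by move=> Dx; have := ga x Dx; rewrite ler_norml => /andP[? ?]; apply/andP; split; lra.
have ig : nu.-integrable D (EFin \o g).
  apply: mass1_integrable => //; exists (`|a| + e) => x Dx.
  by rewrite -[g x](subrK a) (le_trans (ler_normD _ _)) // addrC lerD // ga.
have ic (c : R) : nu.-integrable D (EFin \o cst c).
  by apply: mass1_integrable => //; exists `|c|.
have lo : a - e <= \int[nu]_(x in D) g x.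
  rewrite -[leLHS]mass1_Rintegral_cst; apply: le_Rintegral => //; first exact: ic.
  by move=> x /g_bounds /andP[].
have hi : \int[nu]_(x in D) g x <= a + e.
  rewrite -[leRHS]mass1_Rintegral_cst; apply: le_Rintegral => //; first exact: ic.
  by move=> x /g_bounds /andP[].
by rewrite ler_norml; apply/andP; split; lra.
Qed.

End UnitMassIntegral.

Section Convolution.
Context {R : realType} (mu : probability R R).
Implicit Types (g h : R -> R).

Definition conv_op g (x : R) : R := \int[mu]_(y in setT) g (x + y).

Lemma conv_intE n g : conv_int mu n g = iter n conv_op g 0.
Proof. by elim: n g => //= n IH g; rewrite IH -iterSr. Qed.

Let mu_setT : mu setT = 1%E := probability_setT mu.

Lemma conv_op_near g (a e : R) : continuous g -> (forall y, `|g y - a| <= e) ->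
  forall x, `|conv_op g x - a| <= e.
Proof.
move=> cg ga x; apply: mass1_Rintegral_near => //.
exact: continuous_measurable_fun (continuous_comp_addl (t := x) cg).
Qed.

Lemma conv_op_integrable g x : circle_continuous g ->
  mu.-integrable setT (EFin \o fun y => g (x + y)).
Proof.
move=> Cg; have [M gM] := periodic1_bounded Cg.
apply: mass1_integrable => //; last by exists M.
exact: continuous_measurable_fun (continuous_comp_addl (t := x) Cg.1).
Qed.

Lemma conv_op_circle_continuous g : circle_continuous g -> circle_continuous (conv_op g).
Proof.
move=> Cg; split; last by move=> x; apply: eq_Rintegral => y _; rewrite addrAC Cg.2.
move=> x; apply/cvgrPdist_le => e e0.
have [d d0 gd] := periodic1_unif_continuous Cg e0.
near=> x'.
have xx' : `|x - x'| < d by near: x'; apply/nbhs_ballP; exists d.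
rewrite /conv_op -RintegralB //; try exact: conv_op_integrable.
rewrite -[X in `|X|]subr0; apply: mass1_Rintegral_near => //.
  apply: continuous_measurable_fun => y; apply: cvgB.
  - exact: (continuous_comp_addl (t := x) Cg.1) y.
  - exact: (continuous_comp_addl (t := x') Cg.1) y.
by move=> y _; rewrite subr0 ltW // gd // opprD addrACA subrr addr0.
Unshelve. all: by end_near.
Qed.

Lemma iter_conv_op_circle_continuous n g :
  circle_continuous g -> circle_continuous (iter n conv_op g).
Proof. exact/iter_circle_continuous/conv_op_circle_continuous. Qed.

Lemma iter_conv_op_near n g (a e : R) : circle_continuous g ->
  (forall y, `|g y - a| <= e) -> forall x, `|iter n conv_op g x - a| <= e.
Proof.
move=> Cg ga; elim: n => //= n IH.
exact: conv_op_near (iter_conv_op_circle_continuous n Cg).1 IH.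
Qed.

Lemma iter_conv_opD n g1 g2 : circle_continuous g1 -> circle_continuous g2 ->
  iter n conv_op (fun x => g1 x + g2 x) =
  fun x => iter n conv_op g1 x + iter n conv_op g2 x.
Proof.
move=> C1 C2; elim: n => //= n ->; apply: funext => x.
by rewrite /conv_op RintegralD //; exact: conv_op_integrable (iter_conv_op_circle_continuous _ _).
Qed.

Lemma leb_transfer_conv_scaled g (s : R) : circle_continuous g ->
  leb_transfer (fun x => \int[mu]_(y in setT) g (x + y * s)) =
  fun z => \int[mu]_(y in setT) leb_transfer g (z + y * (s * 2)).
Proof.
move=> Cg; apply: funext => z.
have ig (u : R) : mu.-integrable setT (EFin \o fun y => g (u + y * s)).
  have [M gM] := periodic1_bounded Cg.
  apply: mass1_integrable => //; last by exists M.
  apply: continuous_measurable_fun.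
  exact: (continuous_comp_mulr (f := fun w => g (u + w))) (continuous_comp_addl (t := u) Cg.1).
rewrite /leb_transfer /transfer.
transitivity (\int[mu]_(y in setT) (2^-1 * g (z / 2 + y * s) + 2^-1 * g ((z + 1) / 2 + y * s))).
  have igZ (u : R) : mu.-integrable setT (EFin \o fun y => 2^-1 * g (u + y * s)).
    exact: eq_integrable (integrableZl _ _ (ig u)).
  by rewrite RintegralD ?RintegralZl.
by apply: eq_Rintegral => y _; congr (_ * g _ + _ * g _); field.
Qed.

Lemma iter_leb_transfer_conv_op m h : circle_continuous h ->
  iter m leb_transfer (conv_op h) =
  fun z => \int[mu]_(y in setT) iter m leb_transfer h (z + y * 2 ^+ m).
Proof.
move=> Ch; elim: m => [|m /= ->].
  by apply: funext => z; apply: eq_Rintegral => y _; rewrite mulr1.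
rewrite leb_transfer_conv_scaled ?exprSr //.
exact: iter_leb_transfer_circle_continuous.
Qed.

Lemma iter_leb_transfer_conv_op_eq0 n m h : circle_continuous h ->
  (forall z, iter m leb_transfer h z = 0) ->
  forall z, iter m leb_transfer (iter n (conv_op) h) z = 0.
Proof.
move=> Ch h0; elim: n => //= n IH z.
rewrite iter_leb_transfer_conv_op; last exact: iter_conv_op_circle_continuous.
by under eq_Rintegral do rewrite IH; exact: mass1_Rintegral_cst.
Qed.

End Convolution.

Section GibbsContraction.
Context {R : realType} (J : R -> R) (mu : probability R R) (eta : R).
Hypotheses (CJ : circle_continuous J) (gibbsJ : gibbs J mu).
Hypotheses (eta_gt0 : 0 < eta) (J_ge : forall x, eta <= J x).
Hypothesis J_sum1 : forall y, J (y / 2) + J ((y + 1) / 2) = 1.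

Let mu_setT : mu setT = 1%E := probability_setT mu.

Lemma gibbs_iter_transfer m g : circle_continuous g ->
  \int[mu]_(y in setT) iter m (transfer J) g y = \int[mu]_(y in setT) g y.
Proof.
move=> Cg; elim: m => //= m <-.
have [cLg pLg] := iter_transfer_circle_continuous m CJ Cg.
exact: gibbsJ.2.
Qed.

Lemma conv_op_contraction m h (K : R) : circle_continuous h ->
  (forall z, iter m leb_transfer h z = 0) -> (forall x, `|h x| <= K) ->
  forall x, `|conv_op mu h x| <= (1 - (2 * eta) ^+ m) * K.
Proof.
move=> Ch h0 hK x.
have Chx : circle_continuous (fun y => h (x + y)).
  by split; [exact: continuous_comp_addl Ch.1 | move=> y; rewrite addrA Ch.2].
rewrite /conv_op -(gibbs_iter_transfer m Chx) -[X in `|X|]subr0.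
apply: mass1_Rintegral_near => //.
  exact: continuous_measurable_fun (iter_transfer_circle_continuous m CJ Chx).1.
move=> y _; have := iter_transfer_doeblin (ltW eta_gt0) J_ge J_sum1 m (fun y => hK (x + y)) y.
by rewrite iter_leb_transfer_shift h0 mulr0 !subr0.
Qed.

Lemma iter_conv_op_cvg0 m h x : circle_continuous h ->
  (forall z, iter m leb_transfer h z = 0) ->
  (fun n => iter n (conv_op mu) h x) @ \oo --> 0.
Proof.
move=> Ch h0; have [K hK] := periodic1_bounded Ch.
set c := (2 * eta) ^+ m.
have c_gt0 : 0 < c by rewrite exprn_gt0 // mulr_gt0.
have c_le1 : c <= 1.
  apply: exprn_ile1; first by rewrite mulr_ge0 // ltW.
  by have := J_sum1 0; have := J_ge (0 / 2); have := J_ge ((0 + 1) / 2); lra.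
have P_le n x' : `|iter n (conv_op mu) h x'| <= K * (1 - c) ^+ n.
  elim: n x' => [|n IH] x' /=; first by rewrite expr0 mulr1.
  rewrite exprS mulrCA; apply: conv_op_contraction => //.
  - exact: iter_conv_op_circle_continuous.
  - exact: iter_leb_transfer_conv_op_eq0.
apply/norm_cvg0P; apply: (squeeze_cvgr (f := cst 0) (h := geometric K (1 - c))).
- by near=> n; rewrite normr_ge0 P_le.
- exact: cvg_cst.
- by apply: cvg_geometric; rewrite ger0_norm; lra.
Unshelve. all: by end_near.
Qed.

End GibbsContraction.

Lemma leb_transfer_decomposition {R : realType} (phi : R -> R) (e : R) :
  circle_continuous phi -> 0 < e ->
  exists m (a : R) (A : R -> R),
    [/\ circle_continuous A, forall x, `|A x - a| <= e,
        `|\int[lebesgue_measure]_(x in `[0, 1[) phi x - a| <= e &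
        forall z, iter m leb_transfer (fun x => phi x - A x) z = 0].
Proof.
move=> Cphi e_gt0; have [m flat] := iter_leb_transfer_flat Cphi e_gt0.
set psi := iter m leb_transfer phi.
have Cpsi : circle_continuous psi := iter_leb_transfer_circle_continuous m Cphi.
exists m, (psi 0), (fun x => psi (x * 2 ^+ m)); split.
- exact: circle_continuous_dilate.
- by move=> x; exact/ltW/flat.
- rewrite -(iter_leb_transfer_integral01 m Cphi.1); apply: mass1_Rintegral_near => //.
  + by move: (lebesgue_measure_itv `[(0:R), (1:R)[) => /= ->; rewrite lte_fin ltr01 oppr0 adde0.
  + exact: measurable_funS (continuous_measurable_fun Cpsi.1).
  + by move=> x _; exact/ltW/flat.
- by move=> z; rewrite iter_transferB (iter_leb_transfer_dilate m Cpsi.2) subrr.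
Qed.

Unset Implicit Arguments.

Theorem theorem4 (R : realType) (J : R -> R) (mu : probability R R) :
  (forall x, 0 < J x) -> periodic1 J -> holder J ->
  (forall y, J (y / 2) + J ((y + 1) / 2) = 1) ->
  gibbs J mu ->
  forall phi : R -> R, continuous phi -> periodic1 phi ->
    (fun n => conv_int mu n phi) @ \oo -->
      \int[lebesgue_measure]_(x in `[0, 1[) phi x.
Proof.
move=> J_gt0 pJ hJ J_sum1 gibbsJ phi cphi pphi.
have CJ : circle_continuous J := conj (holder_continuous hJ) pJ.
have Cphi : circle_continuous phi := conj cphi pphi.
have [c [d Jcd]] := periodic1_EVT CJ.
have J_ge x : J c <= J x by have /andP[] := Jcd x.
have -> : (fun n => conv_int mu n phi) = fun n => iter n (conv_op mu) phi 0.
  by apply: funext => n; exact: conv_intE.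
apply/cvgrPdist_le => e e_gt0; have e3_gt0 : 0 < e / 3 by rewrite divr_gt0.
have [m [a [A [CA A_near I_near UA0]]]] := leb_transfer_decomposition Cphi e3_gt0.
have Ch := circle_continuousB Cphi CA.
have /cvgrPdist_le/(_ _ e3_gt0) := iter_conv_op_cvg0 CJ gibbsJ (J_gt0 c) J_ge J_sum1 0 Ch UA0.
apply: filterS => n; rewrite sub0r normrN => Ph_near.
have phiE : phi = (fun x => (phi x - A x) + A x) by apply: funext => x; rewrite subrK.
rewrite [in iter _ _ phi]phiE iter_conv_opD //.
have := iter_conv_op_near mu n CA A_near 0.
move: I_near Ph_near; rewrite !ler_norml => /andP[? ?] /andP[? ?] /andP[? ?].
by apply/andP; split; lra.
Qed.
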